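(* Let $\mathcal{K}^{\langle\infty\rangle}$ be an unbounded simple nested fractal. Then $$\inf\big\{\mathrm{dist}(\Delta_0^{(1)},\Delta_0^{(2)}):\ \Delta_0^{(1)},\Delta_0^{(2)}\in\mathcal{T}_0,\ \Delta_0^{(1)}\cap\Delta_0^{(2)}=\emptyset\big\}>0.$$
   Context: Setting: $L>1$, $N\ge2$, $\nu_1=0,\dots,\nu_N\in\mathbb{R}^2$, $\Psi_i(x)=x/L+\nu_i$, and $\mathcal{K}^{\langle 0\rangle}=\bigcup_i\Psi_i(\mathcal{K}^{\langle 0\rangle})$ is a planar simple nested fractal (with $V_0^{\langle0\rangle}$ its set of essential fixed points, $k=\#V_0^{\langle0\rangle}\ge3$). $\mathcal{K}^{\langle M\rangle}=L^M\mathcal{K}^{\langle 0\rangle}$ for $M\in\mathbb{Z}$, $\mathcal{K}^{\langle\infty\rangle}=\bigcup_{M\ge0}\mathcal{K}^{\langle M\rangle}$. An $M$-complex is $\Delta_M=\mathcal{K}^{\langle M\rangle}+\sum_{j=M+1}^{J}L^j\nu_{i_j}$ for some $J\ge M+1$ and $i_j\in\{1,\dots,N\}$; $\mathcal{T}_M$ is the set of all $M$-complexes. For closed bounded $E,F$, $\mathrm{dist}(E,F)=\inf\{|x-y|:x\in E,y\in F\}$ (Euclidean). *)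

From Stdlib Require Import Reals Lra List.
Import ListNotations.
Open Scope R_scope.

Definition pt := (R * R)%type.
Definition padd (x y : pt) : pt := (fst x + fst y, snd x + snd y).
Definition psub (x y : pt) : pt := (fst x - fst y, snd x - snd y).
Definition pscale (a : R) (x : pt) : pt := (a * fst x, a * snd x).
Definition pdot (x y : pt) : R := fst x * fst y + snd x * snd y.
Definition pnorm (x : pt) : R := sqrt (pdot x x).
Definition pdist (x y : pt) : R := pnorm (psub x y).

(* The similitudes Psi_i(x) = x/L + nu_i; the paper's indices 1..N are
   encoded as 0..N-1, so nu_1 = 0 becomes nu 0 = (0,0). *)
Definition Psi (L : R) (nu : nat -> pt) (i : nat) (x : pt) : pt :=
  padd (pscale (/ L) x) (nu i).

Definition image (f : pt -> pt) (A : pt -> Prop) : pt -> Prop :=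
  fun y => exists x, A x /\ y = f x.

Definition pbounded (A : pt -> Prop) : Prop :=
  exists r, forall x, A x -> pnorm x <= r.
Definition closed_set (A : pt -> Prop) : Prop :=
  forall x, (forall eps, 0 < eps -> exists y, A y /\ pdist x y < eps) -> A x.
Definition open_set (A : pt -> Prop) : Prop :=
  forall x, A x -> exists eps, 0 < eps /\ forall y, pdist x y < eps -> A y.
Definition compact_set (A : pt -> Prop) : Prop := closed_set A /\ pbounded A.

Definition is_attractor (L : R) (N : nat) (nu : nat -> pt) (K : pt -> Prop) : Prop :=
  (exists x, K x) /\ compact_set K /\
  forall x, K x <-> exists i, (i < N)%nat /\ image (Psi L nu i) K x.

Definition fixpts (L : R) (N : nat) (nu : nat -> pt) (x : pt) : Prop :=
  exists i, (i < N)%nat /\ Psi L nu i x = x.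

Definition V0 (L : R) (N : nat) (nu : nat -> pt) (x : pt) : Prop :=
  fixpts L N nu x /\
  exists i j y, (i < N)%nat /\ (j < N)%nat /\ i <> j /\ fixpts L N nu y /\
    Psi L nu i x = Psi L nu j y.

Fixpoint Vn (L : R) (N : nat) (nu : nat -> pt) (n : nat) : pt -> Prop :=
  match n with
  | O => V0 L N nu
  | S m => fun x => exists i, (i < N)%nat /\ image (Psi L nu i) (Vn L N nu m) x
  end.

(* reflection in the perpendicular bisector of the segment [x,y] *)
Definition refl (x y z : pt) : pt :=
  let d := psub x y in
  let m := pscale (1/2) (padd x y) in
  psub z (pscale (2 * pdot (psub z m) d / pdot d d) d).

Definition open_set_condition (L : R) (N : nat) (nu : nat -> pt) : Prop :=
  exists U : pt -> Prop, open_set U /\ pbounded U /\ (exists x, U x) /\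
    (forall i x, (i < N)%nat -> image (Psi L nu i) U x -> U x) /\
    (forall i j x, (i < N)%nat -> (j < N)%nat -> i <> j ->
        ~ (image (Psi L nu i) U x /\ image (Psi L nu j) U x)).

Definition connectivity (L : R) (N : nat) (nu : nat -> pt) : Prop :=
  forall i j, (i < N)%nat -> (j < N)%nat ->
  exists (m : nat) (c : nat -> nat), c O = i /\ c m = j /\
    (forall l, (l <= m)%nat -> (c l < N)%nat) /\
    (forall l, (l < m)%nat -> exists z,
        image (Psi L nu (c l)) (V0 L N nu) z /\
        image (Psi L nu (c (S l))) (V0 L N nu) z).

Definition symmetry (L : R) (N : nat) (nu : nat -> pt) : Prop :=
  forall x y, V0 L N nu x -> V0 L N nu y -> x <> y ->
  forall n z, Vn L N nu n z -> Vn L N nu n (refl x y z).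

Definition nesting (L : R) (N : nat) (nu : nat -> pt) (K : pt -> Prop) : Prop :=
  forall i j, (i < N)%nat -> (j < N)%nat -> i <> j -> forall z,
    (image (Psi L nu i) K z /\ image (Psi L nu j) K z) <->
    (image (Psi L nu i) (V0 L N nu) z /\ image (Psi L nu j) (V0 L N nu) z).

(* planar simple nested fractal K^<0> generated by Psi_i(x) = x/L + nu_i,
   with k = #V_0 >= 3 *)
Definition simple_nested_fractal (L : R) (N : nat) (nu : nat -> pt) (K : pt -> Prop) : Prop :=
  1 < L /\ (2 <= N)%nat /\ nu O = (0, 0) /\
  is_attractor L N nu K /\
  (exists a b c, V0 L N nu a /\ V0 L N nu b /\ V0 L N nu c /\
      a <> b /\ b <> c /\ a <> c) /\
  open_set_condition L N nu /\ connectivity L N nu /\ symmetry L N nu /\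
  nesting L N nu K.

Definition Kinf (L : R) (K : pt -> Prop) : pt -> Prop :=
  fun x => exists M : nat, image (pscale (L ^ M)) K x.

Definition complex0 (L : R) (N : nat) (nu : nat -> pt) (K : pt -> Prop)
  (D : pt -> Prop) : Prop :=
  exists (J : nat) (w : nat -> nat), (1 <= J)%nat /\
    (forall j, (1 <= j <= J)%nat -> (w j < N)%nat) /\
    let s := fold_right padd (0, 0)
               (map (fun j => pscale (L ^ j) (nu (w j))) (seq 1 J)) in
    forall x, D x <-> K (psub x s).

(* Write a 0-complex as [K + offset l], where the address [l] lists its digits from
   the finest scale up.  Two disjoint 0-complexes with addresses [a :: m1] and
   [b :: m2] of equal length lie in the 1-complexes [L (K + offset m1)] and
   [L (K + offset m2)].  If these parents are disjoint, scaling by [/ L] and induction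
   on the length give the bound.  If they meet, the nesting axiom forces them to meet
   at images of essential fixed points, so the two 0-complexes are [K + o] and
   [K + o - d] with [d] in a finite set determined by [nu] and the fixed points of the
   [Psi i].  For each such [d] with [K] and [K + d] disjoint, compactness of [K] gives
   a positive gap, and [delta] is the least of these finitely many gaps. *)

From Pilot Require Import Defs.
From Stdlib Require Import Reals Lra Lia List Classical ClassicalEpsilon.
Import ListNotations.
Open Scope R_scope.

Ltac pt_field :=
  unfold Psi, padd, psub, pscale; apply injective_projections; simpl; field; lra.

Lemma pnorm_ge0 u : 0 <= pnorm u.
Proof. apply sqrt_pos. Qed.

Lemma pnorm_scale c u : pnorm (pscale c u) = Rabs c * pnorm u.
Proof.
  destruct u as [a b]; unfold pnorm, pdot, pscale; simpl.
  replace (c * a * (c * a) + c * b * (c * b)) with (Rsqr c * (a * a + b * b))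
    by (unfold Rsqr; ring).
  rewrite sqrt_mult_alt by apply Rle_0_sqr.
  now rewrite sqrt_Rsqr_abs.
Qed.

Lemma Rabs_fst_le_pnorm u : Rabs (fst u) <= pnorm u.
Proof.
  destruct u as [a b]; unfold pnorm, pdot; simpl.
  rewrite <- sqrt_Rsqr_abs; apply sqrt_le_1_alt; unfold Rsqr; nra.
Qed.

Lemma Rabs_snd_le_pnorm u : Rabs (snd u) <= pnorm u.
Proof.
  destruct u as [a b]; unfold pnorm, pdot; simpl.
  rewrite <- sqrt_Rsqr_abs; apply sqrt_le_1_alt; unfold Rsqr; nra.
Qed.

Lemma pnorm_le_Rabs_sum u : pnorm u <= Rabs (fst u) + Rabs (snd u).
Proof.
  destruct u as [a b]; unfold pnorm, pdot; simpl.
  pose proof (Rabs_pos a); pose proof (Rabs_pos b).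
  rewrite <- (sqrt_square (Rabs a + Rabs b)) by lra.
  apply sqrt_le_1_alt.
  assert (Rabs a * Rabs a = a * a) by (rewrite <- Rabs_mult; apply Rabs_pos_eq; nra).
  assert (Rabs b * Rabs b = b * b) by (rewrite <- Rabs_mult; apply Rabs_pos_eq; nra).
  nra.
Qed.

Lemma pnorm_triangle u v : pnorm (padd u v) <= pnorm u + pnorm v.
Proof.
  destruct u as [a b], v as [c d]; unfold pnorm, pdot, padd; simpl.
  set (A := a * a + b * b); set (C := c * c + d * d).
  assert (HA : 0 <= A) by (unfold A; nra).
  assert (HC : 0 <= C) by (unfold C; nra).
  assert (Cauchy_Schwarz : a * c + b * d <= sqrt A * sqrt C).
  { rewrite <- sqrt_mult by assumption.
    destruct (Rle_or_lt (a * c + b * d) 0).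
    - pose proof (sqrt_pos (A * C)); lra.
    - rewrite <- (sqrt_square (a * c + b * d)) by lra.
      apply sqrt_le_1_alt; unfold A, C.
      pose proof (Rle_0_sqr (a * d - b * c)); unfold Rsqr in *; nra. }
  pose proof (sqrt_pos A); pose proof (sqrt_pos C).
  rewrite <- (sqrt_square (sqrt A + sqrt C)) by lra.
  apply sqrt_le_1_alt.
  pose proof (sqrt_sqrt A HA); pose proof (sqrt_sqrt C HC).
  unfold A, C in *; nra.
Qed.

Lemma pdist_sym x y : pdist x y = pdist y x.
Proof. unfold pdist, pnorm, pdot, psub; simpl; f_equal; ring. Qed.

Lemma pdist_triangle x y z : pdist x z <= pdist x y + pdist y z.
Proof.
  unfold pdist.
  replace (psub x z) with (padd (psub x y) (psub y z))
    by (unfold padd, psub; simpl; f_equal; ring).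
  apply pnorm_triangle.
Qed.

Lemma pdist_translate u v d : pdist (padd u d) (padd v d) = pdist u v.
Proof. unfold pdist; f_equal; unfold padd, psub; simpl; f_equal; ring. Qed.

Lemma pdist_scale c x y : pdist (pscale c x) (pscale c y) = Rabs c * pdist x y.
Proof.
  unfold pdist; rewrite <- pnorm_scale.
  f_equal; unfold pscale, psub; simpl; f_equal; ring.
Qed.

Lemma inv_INR_S_eventually_lt eps : 0 < eps ->
  exists M, forall m, (M <= m)%nat -> / INR (S m) < eps.
Proof.
  intros Heps; destruct (archimed_cor1 eps Heps) as [M [HM HM0]].
  exists M; intros m Hm.
  apply Rle_lt_trans with (/ INR M); [|exact HM].
  apply Rinv_le_contravar; [apply lt_0_INR; lia | apply le_INR; lia].
Qed.

Lemma inv_INR_S_pos n : 0 < / INR (S n).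
Proof. apply Rinv_0_lt_compat, lt_0_INR; lia. Qed.

Definition cluster_point (a : nat -> pt) (c : pt) : Prop :=
  forall eps, 0 < eps -> forall n, exists p, (n <= p)%nat /\ pdist (a p) c < eps.

Lemma bounded_real_seq_cluster (u : nat -> R) r : (forall n, Rabs (u n) <= r) ->
  exists l, forall eps, 0 < eps -> forall n, exists p, (n <= p)%nat /\ Rabs (u p - l) < eps.
Proof.
  intros Hbd.
  destruct (Bolzano_Weierstrass u (fun c => -r <= c <= r)) as [l Hl].
  - apply compact_P3.
  - intros n; specialize (Hbd n).
    pose proof (Rle_abs (u n)); pose proof (Rle_abs (- u n)).
    rewrite Rabs_Ropp in *; lra.
  - exists l; intros eps Heps n.
    destruct (Hl (disc l (mkposreal eps Heps)) n) as [p [Hp Hdisc]].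
    + exists (mkposreal eps Heps); intros y Hy; exact Hy.
    + exists p; split; [exact Hp | exact Hdisc].
Qed.

Lemma bounded_seq_cluster (a : nat -> pt) r : (forall n, pnorm (a n) <= r) ->
  exists c, cluster_point a c.
Proof.
  intros Hbd.
  destruct (bounded_real_seq_cluster (fun n => fst (a n)) r) as [l1 H1].
  { intros n; eapply Rle_trans; [apply Rabs_fst_le_pnorm | apply Hbd]. }
  destruct (choice (fun n p => (n <= p)%nat /\ Rabs (fst (a p) - l1) < / INR (S n)))
    as [phi Hphi].
  { intros n; apply H1, inv_INR_S_pos. }
  destruct (bounded_real_seq_cluster (fun n => snd (a (phi n))) r) as [l2 H2].
  { intros n; eapply Rle_trans; [apply Rabs_snd_le_pnorm | apply Hbd]. }
  exists (l1, l2); intros eps Heps n.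
  destruct (inv_INR_S_eventually_lt (eps / 2)) as [M HM]; [lra|].
  destruct (H2 (eps / 2) ltac:(lra) (max n M)) as [m [Hm Hsnd]].
  destruct (Hphi m) as [Hm_phi Hfst].
  exists (phi m); split; [lia|].
  specialize (HM m ltac:(lia)).
  eapply Rle_lt_trans; [apply pnorm_le_Rabs_sum|]; simpl in *; lra.
Qed.

Lemma closed_cluster_point (K : pt -> Prop) a c : Defs.closed_set K ->
  (forall n, K (a n)) -> cluster_point a c -> K c.
Proof.
  intros Hcl Ha Hc; apply Hcl; intros eps Heps.
  destruct (Hc eps Heps O) as [p [_ Hp]].
  exists (a p); split; [apply Ha | now rewrite pdist_sym].
Qed.

Definition shift_disjoint (K : pt -> Prop) (d : pt) : Prop :=
  forall w, ~ (K w /\ K (padd w d)).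

Definition shift_gap (K : pt -> Prop) (d : pt) (e : R) : Prop :=
  forall k1 k2, K k1 -> K k2 -> e <= pdist (padd k1 d) k2.

Lemma compact_shift_gap (K : pt -> Prop) d : compact_set K -> shift_disjoint K d ->
  exists e, 0 < e /\ shift_gap K d e.
Proof.
  intros [Hcl [r Hr]] Hdisj; apply NNPP; intros Hno.
  destruct (choice (fun n (k : pt * pt) => K (fst k) /\ K (snd k) /\
      pdist (padd (fst k) d) (snd k) < / INR (S n))) as [k Hk].
  { intros n; apply NNPP; intros Hn; apply Hno.
    exists (/ INR (S n)); split; [apply inv_INR_S_pos|].
    intros k1 k2 Hk1 Hk2; apply Rnot_lt_le; intros Hlt.
    apply Hn; exists (k1, k2); auto. }
  destruct (bounded_seq_cluster (fun n => fst (k n)) r) as [c Hc].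
  { intros n; apply Hr, Hk. }
  apply (Hdisj c); split.
  - apply (closed_cluster_point K (fun n => fst (k n)) c Hcl); [intros n; apply Hk | exact Hc].
  - apply (closed_cluster_point K (fun n => snd (k n))); [exact Hcl | intros n; apply Hk|].
    intros eps Heps n.
    destruct (inv_INR_S_eventually_lt (eps / 2)) as [M HM]; [lra|].
    destruct (Hc (eps / 2) ltac:(lra) (max n M)) as [p [Hp Hclose]].
    exists p; split; [lia|].
    destruct (Hk p) as [_ [_ Hgap]]; specialize (HM p ltac:(lia)).
    rewrite <- (pdist_translate (fst (k p)) c d) in Hclose.
    pose proof (pdist_triangle (snd (k p)) (padd (fst (k p)) d) (padd c d)).
    rewrite pdist_sym in Hgap; lra.
Qed.

Lemma shift_gap_le K d e e' : shift_gap K d e -> e' <= e -> shift_gap K d e'.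
Proof. intros H He k1 k2 H1 H2; specialize (H k1 k2 H1 H2); lra. Qed.

Lemma compact_finite_shifts_gap (K : pt -> Prop) (ds : list pt) : compact_set K ->
  exists e, 0 < e /\ forall d, In d ds -> shift_disjoint K d -> shift_gap K d e.
Proof.
  intros Hcomp; induction ds as [|d ds [e1 [He1 IH]]].
  - exists 1; split; [lra | intros d []].
  - assert (Hd : exists e2, 0 < e2 /\ (shift_disjoint K d -> shift_gap K d e2)).
    { destruct (classic (shift_disjoint K d)) as [Hdisj | Hndisj].
      - destruct (compact_shift_gap K d Hcomp Hdisj) as [e2 [He2 Hgap]].
        exists e2; auto.
      - exists 1; split; [lra | contradiction]. }
    destruct Hd as [e2 [He2 Hgap]].
    exists (Rmin e1 e2); split; [now apply Rmin_pos|].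
    intros d' [<- | Hin] Hdisj.
    + eapply shift_gap_le; [apply Hgap, Hdisj | apply Rmin_r].
    + eapply shift_gap_le; [apply IH; assumption | apply Rmin_l].
Qed.

Lemma translates_shift_disjoint (K : pt -> Prop) o1 o2 :
  (forall z, ~ (K (psub z o1) /\ K (psub z o2))) -> shift_disjoint K (psub o1 o2).
Proof.
  intros Hdisj w [Hw Hwd]; apply (Hdisj (padd w o1)); split.
  - replace (psub (padd w o1) o1) with w by pt_field; exact Hw.
  - replace (psub (padd w o1) o2) with (padd w (psub o1 o2)) by pt_field; exact Hwd.
Qed.

Lemma translates_gap (K : pt -> Prop) o1 o2 e x y : shift_gap K (psub o1 o2) e ->
  K (psub x o1) -> K (psub y o2) -> e <= pdist x y.
Proof.
  intros Hgap Hx Hy; specialize (Hgap _ _ Hx Hy).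
  replace (pdist x y) with (pdist (padd (psub x o1) (psub o1 o2)) (psub y o2)); [exact Hgap|].
  unfold pdist; f_equal; pt_field.
Qed.

Lemma pscale_inj c x y : c <> 0 -> pscale c x = pscale c y -> x = y.
Proof.
  destruct x as [x1 x2], y as [y1 y2]; unfold pscale; simpl; intros Hc H.
  injection H as H1 H2; f_equal; eapply Rmult_eq_reg_l; eassumption.
Qed.

Section NestedFractal.

Variables (L : R) (N : nat) (nu : nat -> pt) (K : pt -> Prop).
Hypothesis L_gt1 : 1 < L.
Hypothesis K_self_similar :
  forall x, K x <-> exists i, (i < N)%nat /\ image (Psi L nu i) K x.
Hypothesis K_closed : Defs.closed_set K.
Hypothesis K_nonempty : exists k, K k.
Hypothesis K_nesting : nesting L N nu K.
Hypothesis V0_nonempty : exists v, V0 L N nu v.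

Local Notation word w := (Forall (fun i => (i < N)%nat) w).

Lemma inv_L_bounds : 0 < / L < 1.
Proof. split; [apply Rinv_0_lt_compat | rewrite <- Rinv_1; apply Rinv_lt_contravar]; lra. Qed.

Lemma Psi_in_K i x : (i < N)%nat -> K x -> K (Psi L nu i x).
Proof. intros Hi Hx; apply K_self_similar; exists i; split; [|exists x]; auto. Qed.

Lemma Psi_inj i x y : Psi L nu i x = Psi L nu i y -> x = y.
Proof.
  unfold Psi; intros H.
  apply (pscale_inj (/ L)); [apply Rinv_neq_0_compat; lra|].
  destruct (pscale (/ L) x), (pscale (/ L) y); unfold padd in H; simpl in H.
  injection H as H1 H2; f_equal; lra.
Qed.

Definition Psi_fixpoint (i : nat) : pt := pscale (L / (L - 1)) (nu i).

Lemma Psi_fixed_eq i v : Psi L nu i v = v -> v = Psi_fixpoint i.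
Proof.
  destruct v as [v1 v2]; unfold Psi, Psi_fixpoint, padd, pscale; simpl; intros H.
  injection H as H1 H2.
  f_equal; [replace (fst (nu i)) with (v1 - / L * v1) by lra
            | replace (snd (nu i)) with (v2 - / L * v2) by lra]; field; lra.
Qed.

Lemma Psi_fixed_in_K i x : (i < N)%nat -> Psi L nu i x = x -> K x.
Proof.
  intros Hi Hfix; destruct K_nonempty as [k Hk].
  pose proof inv_L_bounds as HinvL.
  assert (Hcontract : forall y, pdist x (Psi L nu i y) = / L * pdist x y).
  { intros y; rewrite <- Hfix at 1; unfold Psi.
    rewrite pdist_translate, pdist_scale, Rabs_pos_eq; lra. }
  assert (Hiter : forall n, K (Nat.iter n (Psi L nu i) k) /\
      pdist x (Nat.iter n (Psi L nu i) k) = (/ L) ^ n * pdist x k).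
  { induction n as [|n [HKn Hn]]; simpl; [split; [exact Hk | ring]|].
    split; [now apply Psi_in_K | rewrite Hcontract, Hn; ring]. }
  apply K_closed; intros eps Heps.
  pose proof (pnorm_ge0 (psub x k)) as Hd; fold (pdist x k) in Hd.
  destruct (pow_lt_1_zero (/ L) ltac:(rewrite Rabs_pos_eq; lra) (eps / (pdist x k + 1)))
    as [n Hn]; [apply Rdiv_lt_0_compat; lra|].
  exists (Nat.iter n (Psi L nu i) k); split; [apply Hiter|].
  rewrite (proj2 (Hiter n)).
  specialize (Hn n (le_n n)); rewrite Rabs_pos_eq in Hn by (apply pow_le; lra).
  assert (eps / (pdist x k + 1) * (pdist x k + 1) = eps) by (field; lra).
  assert (0 < eps / (pdist x k + 1)) by (apply Rdiv_lt_0_compat; lra).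
  nra.
Qed.

Lemma V0_in_Psi_image c x : (c < N)%nat -> V0 L N nu x ->
  image (Psi L nu c) K x -> image (Psi L nu c) (V0 L N nu) x.
Proof.
  intros Hc Hx HxK; pose proof Hx as [[i [Hi Hfix]] _].
  destruct (Nat.eq_dec c i) as [<- | Hci].
  - exists x; auto.
  - apply (K_nesting c i Hc Hi Hci x); split; [exact HxK|].
    exists x; split; [now apply (Psi_fixed_in_K i) | auto].
Qed.

Fixpoint Psi_word (w : list nat) (x : pt) : pt :=
  match w with
  | [] => x
  | i :: w' => Psi L nu i (Psi_word w' x)
  end.

Lemma Psi_word_in_K w x : word w -> K x -> K (Psi_word w x).
Proof. intros Hw Hx; induction Hw; simpl; auto using Psi_in_K. Qed.

Lemma V0_in_Psi_word_image w x : word w -> V0 L N nu x ->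
  image (Psi_word w) K x -> image (Psi_word w) (V0 L N nu) x.
Proof.
  intros Hw; revert x; induction Hw as [|c w Hc Hw IH]; intros x Hx [k [Hk ->]].
  - exists k; auto.
  - cbn [Psi_word] in Hx |- *.
    destruct (V0_in_Psi_image c _ Hc Hx) as [y [Hy Hky]].
    { exists (Psi_word w k); auto using Psi_word_in_K. }
    apply Psi_inj in Hky.
    destruct (IH y Hy) as [v [Hv Hyv]]; [exists k; auto|].
    exists v; split; [exact Hv|]; cbn [Psi_word]; congruence.
Qed.

Lemma Psi_word_images_meet_at_V0 w1 w2 z : length w1 = length w2 ->
  word w1 -> word w2 -> image (Psi_word w1) K z -> image (Psi_word w2) K z ->
  exists v1 v2, V0 L N nu v1 /\ V0 L N nu v2 /\ Psi_word w1 v1 = Psi_word w2 v2.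
Proof.
  revert w2 z; induction w1 as [|c w1 IH];
    intros [|e w2] z Hlen Hw1 Hw2 [k1 [Hk1 Hz1]] [k2 [Hk2 Hz2]]; try discriminate.
  - destruct V0_nonempty as [v Hv]; exists v, v; auto.
  - inversion Hw1 as [|? ? Hc Hw1']; inversion Hw2 as [|? ? He Hw2']; subst.
    simpl in Hz2 |- *; injection Hlen as Hlen.
    destruct (Nat.eq_dec c e) as [<- | Hce].
    + apply Psi_inj in Hz2.
      destruct (IH w2 (Psi_word w1 k1) Hlen Hw1' Hw2') as [v1 [v2 [Hv1 [Hv2 Hv]]]];
        [exists k1; auto | exists k2; auto |].
      exists v1, v2; rewrite Hv; auto.
    + assert (Hcorner : image (Psi L nu c) (V0 L N nu) (Psi L nu c (Psi_word w1 k1)) /\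
                        image (Psi L nu e) (V0 L N nu) (Psi L nu c (Psi_word w1 k1))).
      { apply K_nesting; auto; split.
        - exists (Psi_word w1 k1); auto using Psi_word_in_K.
        - exists (Psi_word w2 k2); auto using Psi_word_in_K. }
      destruct Hcorner as [[y1 [Hy1 Hz1]] [y2 [Hy2 Hz2']]].
      apply Psi_inj in Hz1; rewrite Hz2 in Hz2'; apply Psi_inj in Hz2'.
      destruct (V0_in_Psi_word_image w1 y1 Hw1' Hy1) as [v1 [Hv1 ->]];
        [exists k1; auto|].
      destruct (V0_in_Psi_word_image w2 y2 Hw2' Hy2) as [v2 [Hv2 ->]];
        [exists k2; auto|].
      exists v1, v2; rewrite <- Hz1, <- Hz2'; auto.
Qed.

(* [offset [i_1; ...; i_J] = \sum_j L^j nu i_j]: the head of an address is its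
   finest digit. *)
Fixpoint offset (l : list nat) : pt :=
  match l with
  | [] => (0, 0)
  | a :: m => pscale L (padd (nu a) (offset m))
  end.

Definition complex (l : list nat) (x : pt) : Prop := K (psub x (offset l)).

Lemma Psi_word_app u v x : Psi_word (u ++ v) x = Psi_word u (Psi_word v x).
Proof. induction u as [|i u IH]; simpl; congruence. Qed.

Lemma Psi_word_rev l y :
  Psi_word (rev l) y = pscale (/ L ^ length l) (padd y (offset l)).
Proof.
  revert y; induction l as [|a l IH]; intros y; simpl.
  - pt_field.
  - rewrite Psi_word_app, IH; simpl.
    pose proof (pow_lt L (length l) ltac:(lra)); pt_field.
Qed.

Lemma complex_iff_Psi_word_image l x :
  complex l x <-> image (Psi_word (rev l)) K (pscale (/ L ^ length l) x).
Proof.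
  pose proof (pow_lt L (length l) ltac:(lra)) as HLn.
  split.
  - intros Hx; exists (psub x (offset l)); split; [exact Hx|].
    rewrite Psi_word_rev; pt_field.
  - intros [k [Hk Hx]]; rewrite Psi_word_rev in Hx.
    apply pscale_inj in Hx; [|apply Rinv_neq_0_compat; lra].
    unfold complex; rewrite Hx; replace (psub _ _) with k by pt_field; exact Hk.
Qed.

Lemma complexes_meet_at_V0 l1 l2 z : length l1 = length l2 -> word l1 -> word l2 ->
  complex l1 z -> complex l2 z ->
  exists v1 v2, V0 L N nu v1 /\ V0 L N nu v2 /\ padd v1 (offset l1) = padd v2 (offset l2).
Proof.
  intros Hlen Hw1 Hw2 Hz1 Hz2.
  apply complex_iff_Psi_word_image in Hz1, Hz2; rewrite Hlen in Hz1.
  destruct (Psi_word_images_meet_at_V0 (rev l1) (rev l2) _ ltac:(now rewrite !length_rev)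
    (Forall_rev Hw1) (Forall_rev Hw2) Hz1 Hz2)
    as [v1 [v2 [Hv1 [Hv2 Hv]]]].
  exists v1, v2; do 2 (split; [assumption|]).
  rewrite !Psi_word_rev, Hlen in Hv.
  apply pscale_inj in Hv; [exact Hv|].
  apply Rinv_neq_0_compat, pow_nonzero; lra.
Qed.

Lemma complex_cons_parent a m x : (a < N)%nat ->
  complex (a :: m) x -> complex m (pscale (/ L) x).
Proof.
  unfold complex; intros Ha Hx.
  replace (psub (pscale (/ L) x) (offset m))
    with (Psi L nu a (psub x (offset (a :: m)))) by (simpl; pt_field).
  now apply Psi_in_K.
Qed.

Lemma V0_Psi_fixpoint v : V0 L N nu v -> exists i, (i < N)%nat /\ v = Psi_fixpoint i.
Proof. intros [[i [Hi Hfix]] _]; exists i; split; [exact Hi | now apply Psi_fixed_eq]. Qed.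

Definition vertex_shift (a b i j : nat) : pt :=
  pscale L (padd (psub (nu a) (nu b)) (psub (Psi_fixpoint j) (Psi_fixpoint i))).

Definition vertex_shifts : list pt :=
  flat_map (fun a => flat_map (fun b => flat_map (fun i =>
    map (vertex_shift a b i) (seq 0 N)) (seq 0 N)) (seq 0 N)) (seq 0 N).

Lemma in_vertex_shifts a b i j : (a < N)%nat -> (b < N)%nat -> (i < N)%nat -> (j < N)%nat ->
  In (vertex_shift a b i j) vertex_shifts.
Proof.
  intros Ha Hb Hi Hj; unfold vertex_shifts.
  apply in_flat_map; exists a; split; [apply in_seq; lia|].
  apply in_flat_map; exists b; split; [apply in_seq; lia|].
  apply in_flat_map; exists i; split; [apply in_seq; lia|].
  apply in_map, in_seq; lia.
Qed.

Lemma touching_parents_shift a b m1 m2 z : (a < N)%nat -> (b < N)%nat ->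
  length m1 = length m2 -> word m1 -> word m2 -> complex m1 z -> complex m2 z ->
  In (psub (offset (a :: m1)) (offset (b :: m2))) vertex_shifts.
Proof.
  intros Ha Hb Hlen Hw1 Hw2 Hz1 Hz2.
  destruct (complexes_meet_at_V0 m1 m2 z) as [v1 [v2 [Hv1 [Hv2 Hv]]]]; auto.
  destruct (V0_Psi_fixpoint v1 Hv1) as [i [Hi ->]].
  destruct (V0_Psi_fixpoint v2 Hv2) as [j [Hj ->]].
  replace (psub (offset (a :: m1)) (offset (b :: m2))) with (vertex_shift a b i j).
  - now apply in_vertex_shifts.
  - assert (E1 := f_equal fst Hv); assert (E2 := f_equal snd Hv).
    unfold vertex_shift; simpl offset; unfold padd, psub, pscale in *; simpl in *.
    apply injective_projections; simpl; nra.
Qed.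

Lemma disjoint_complexes_gap delta :
  (forall d, In d vertex_shifts -> shift_disjoint K d -> shift_gap K d delta) ->
  forall l1 l2, length l1 = length l2 -> word l1 -> word l2 ->
  (forall z, ~ (complex l1 z /\ complex l2 z)) ->
  forall x y, complex l1 x -> complex l2 y -> delta <= pdist x y.
Proof.
  intros Hgap l1; induction l1 as [|a m1 IH];
    intros [|b m2] Hlen Hw1 Hw2 Hdisj x y Hx Hy; try discriminate.
  - exfalso; now apply (Hdisj x).
  - inversion Hw1 as [|? ? Ha Hm1]; inversion Hw2 as [|? ? Hb Hm2]; subst.
    injection Hlen as Hlen.
    destruct (classic (exists z, complex m1 z /\ complex m2 z)) as [[z [Hz1 Hz2]] | Hparents].
    + apply (translates_gap K (offset (a :: m1)) (offset (b :: m2))); auto.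
      apply Hgap; [now apply (touching_parents_shift a b m1 m2 z)|].
      now apply translates_shift_disjoint.
    + assert (Hscaled : delta <= pdist (pscale (/ L) x) (pscale (/ L) y)).
      { apply (IH m2); auto.
        - intros z Hz; apply Hparents; exists z; exact Hz.
        - now apply (complex_cons_parent a).
        - now apply (complex_cons_parent b). }
      pose proof inv_L_bounds as HinvL.
      rewrite pdist_scale, Rabs_pos_eq in Hscaled by lra.
      pose proof (pnorm_ge0 (psub x y)); fold (pdist x y) in *.
      nra.
Qed.

Lemma offset_app_zeros l k : nu O = (0, 0) -> offset (l ++ repeat O k) = offset l.
Proof.
  intros Hnu0; induction l as [|a l IH]; simpl; [|now rewrite IH].
  induction k as [|k IHk]; simpl; [reflexivity|].
  rewrite IHk, Hnu0; pt_field.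
Qed.

Lemma offset_seq (w : nat -> nat) J k :
  fold_right padd (0, 0) (map (fun j => pscale (L ^ j) (nu (w j))) (seq (S k) J)) =
  pscale (L ^ k) (offset (map w (seq (S k) J))).
Proof.
  revert k; induction J as [|J IH]; intros k; simpl; [pt_field|].
  rewrite IH; pt_field.
Qed.

Lemma complex0_addresses D : nu O = (0, 0) -> complex0 L N nu K D ->
  exists J, forall M, (J <= M)%nat ->
  exists l, length l = M /\ word l /\ forall x, D x <-> complex l x.
Proof.
  intros Hnu0 [J [w [HJ [Hw HD]]]]; exists J; intros M HM.
  exists (map w (seq 1 J) ++ repeat O (M - J)); split; [|split].
  - rewrite length_app, length_map, length_seq, repeat_length; lia.
  - apply Forall_app; split.
    + apply Forall_map, Forall_forall; intros j Hj; apply in_seq in Hj; apply Hw; lia.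
    + apply Forall_forall; intros i Hi; apply repeat_spec in Hi; subst.
      specialize (Hw 1%nat ltac:(lia)); lia.
  - intros x; unfold complex; rewrite offset_app_zeros by exact Hnu0.
    rewrite HD, (offset_seq w J 0); simpl pow.
    replace (pscale 1 _) with (offset (map w (seq 1 J))) by pt_field; reflexivity.
Qed.

End NestedFractal.

Theorem lemmaA1 (L : R) (N : nat) (nu : nat -> pt) (K : pt -> Prop) :
  simple_nested_fractal L N nu K ->
  ~ pbounded (Kinf L K) ->
  exists delta, 0 < delta /\
    forall D1 D2 : pt -> Prop,
      complex0 L N nu K D1 -> complex0 L N nu K D2 ->
      (forall x, ~ (D1 x /\ D2 x)) ->
      forall x y, D1 x -> D2 y -> delta <= pdist x y.
Proof.
  intros [HL [_ [Hnu0 [[HKne [HKcomp HKss]] [[v [_ [_ [Hv _]]]] [_ [_ [_ Hnest]]]]]]]] _.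
  destruct (compact_finite_shifts_gap K (vertex_shifts L N nu) HKcomp)
    as [delta [Hdelta Hgap]].
  exists delta; split; [exact Hdelta|].
  intros D1 D2 HD1 HD2 Hdisj x y Hx Hy.
  destruct (complex0_addresses L N nu K D1 Hnu0 HD1) as [J1 HJ1].
  destruct (complex0_addresses L N nu K D2 Hnu0 HD2) as [J2 HJ2].
  destruct (HJ1 (max J1 J2)) as [l1 [Hlen1 [Hw1 E1]]]; [lia|].
  destruct (HJ2 (max J1 J2)) as [l2 [Hlen2 [Hw2 E2]]]; [lia|].
  apply (disjoint_complexes_gap L N nu K HL HKss (proj1 HKcomp) HKne Hnest
    (ex_intro _ v Hv) delta Hgap l1 l2); auto.
  - congruence.
  - intros z [Hz1 Hz2]; apply (Hdisj z); split; [apply E1 | apply E2]; assumption.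
  - now apply E1.
  - now apply E2.
Qed.
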